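(* Let $M$ be a multigraph with $n$ vertices. Then $M$ is the double competition multigraph of an acyclic digraph if and only if there exist an ordering $(v_1,\ldots,v_n)$ of the vertices of $M$ and a double indexed edge clique partition $\{S_{ij}\mid i,j\in[n]\}$ of $M$ such that the following conditions hold: (I) for any $i,j\in[n]$, if $|A_i\cap B_j|\ge 2$, then $A_i\cap B_j=S_{ij}$; (IV) for any $i,j,k\in[n]$, $v_k\in S_{ij}$ implies $i<k<j$, where $A_i = S_{i*}\cup T^+_i$, $S_{i*} := \bigcup_{p\in[n]} S_{ip}$, $T^+_i := \{v_b \mid a,b\in[n],\ v_i\in S_{ab}\}$, and $B_j = S_{*j}\cup T^-_j$, $S_{*j} := \bigcup_{q\in[n]} S_{qj}$, $T^-_j := \{v_a \mid a,b\in[n],\ v_j\in S_{ab}\}$.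
   Context: A digraph $D$ is a pair $(V(D),A(D))$ with $A(D)$ a set of ordered pairs of vertices (arcs); $D$ is acyclic if it has no directed cycles (in particular no loops). $N^+_D(x)=\{v\mid (x,v)\in A(D)\}$ and $N^-_D(x)=\{v\mid (v,x)\in A(D)\}$. A multigraph $M$ (without loops) is a vertex set $V(M)$ together with a function $m_M$ assigning to each unordered pair $\{x,y\}$ of distinct vertices a nonnegative integer, the number of edges between $x$ and $y$. The double competition multigraph of a digraph $D$ is the multigraph $M$ with $V(M)=V(D)$ and $m_M(\{x,y\}) = |N^+_D(x)\cap N^+_D(y)|\cdot|N^-_D(x)\cap N^-_D(y)|$ for distinct $x,y$. A clique of $M$ is a set of vertices that are pairwise adjacent (i.e. $m_M\ge 1$ on every pair of distinct elements); the empty set and singletons count as cliques. An edge clique partition of $M$ is a family (multiset) $\mathcal{F}$ of cliques of $M$ such that any two distinct vertices $x,y$ are contained in exactly $m_M(\{x,y\})$ members of $\mathcal{F}$; a double indexed edge clique partition $\{S_{ij}\mid i,j\in[n]\}$ is such a family indexed by pairs $(i,j)\in[n]\times[n]$ (members may be empty). $[n]=\{1,\ldots,n\}$. *)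

From mathcomp Require Import all_boot.
Set Implicit Arguments.
Unset Strict Implicit.
Unset Printing Implicit Defensive.

(* A loopless multigraph on V
   is given by a symmetric multiplicity function [m : V -> V -> nat];
   only its values on pairs of distinct vertices are meaningful. *)

Definition outN (V : finType) (arc : rel V) (x : V) : {set V} := [set v | arc x v].
Definition inN (V : finType) (arc : rel V) (x : V) : {set V} := [set v | arc v x].

Definition acyclic (V : finType) (arc : rel V) : Prop :=
  forall x y : V, arc x y -> ~~ connect arc y x.

Definition is_double_competition_multigraph (V : finType) (arc : rel V)
  (m : V -> V -> nat) : Prop :=
  forall x y : V, x != y ->
    m x y = #|outN arc x :&: outN arc y| * #|inN arc x :&: inN arc y|.

Definition is_clique (V : finType) (m : V -> V -> nat) (C : {set V}) : Prop :=
  forall x y : V, x \in C -> y \in C -> x != y -> 1 <= m x y.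

Definition double_indexed_ECP (V : finType) (n : nat) (m : V -> V -> nat)
  (S : 'I_n -> 'I_n -> {set V}) : Prop :=
  (forall i j, is_clique m (S i j)) /\
  (forall x y : V, x != y ->
     #|[set p : 'I_n * 'I_n | (x \in S p.1 p.2) && (y \in S p.1 p.2)]| = m x y).

Definition Srow (V : finType) (n : nat) (S : 'I_n -> 'I_n -> {set V}) (i : 'I_n)
  : {set V} := \bigcup_(p < n) S i p.
Definition Scol (V : finType) (n : nat) (S : 'I_n -> 'I_n -> {set V}) (j : 'I_n)
  : {set V} := \bigcup_(q < n) S q j.
Definition Tplus (V : finType) (n : nat) (v : 'I_n -> V)
  (S : 'I_n -> 'I_n -> {set V}) (i : 'I_n) : {set V} :=
  [set v p.2 | p : 'I_n * 'I_n & v i \in S p.1 p.2].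
Definition Tminus (V : finType) (n : nat) (v : 'I_n -> V)
  (S : 'I_n -> 'I_n -> {set V}) (j : 'I_n) : {set V} :=
  [set v p.1 | p : 'I_n * 'I_n & v j \in S p.1 p.2].
Definition Aset (V : finType) (n : nat) (v : 'I_n -> V)
  (S : 'I_n -> 'I_n -> {set V}) (i : 'I_n) : {set V} :=
  Srow S i :|: Tplus v S i.
Definition Bset (V : finType) (n : nat) (v : 'I_n -> V)
  (S : 'I_n -> 'I_n -> {set V}) (j : 'I_n) : {set V} :=
  Scol S j :|: Tminus v S j.

(* An acyclic digraph is recovered from the double indexed partition
   S_ij := {u | v_i -> u -> v_j}, taken along a topological ordering
   (v_1, ..., v_n): the number of pairs (i, j) with x, y in S_ij is the number
   of common in-neighbours times the number of common out-neighbours of x and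
   y, A_i is contained in the out-neighbourhood of v_i, B_j in the
   in-neighbourhood of v_j, and (IV) is the topological order.  Conversely,
   putting an arc from v_i to every vertex of A_i (equivalently, from every
   vertex of B_j to v_j) gives a digraph which is acyclic by (IV) and in which
   {u | v_i -> u -> v_j} = A_i :&: B_j; by (I) a pair of distinct vertices
   lies in A_i :&: B_j exactly when it lies in S_ij, so the edge counts agree. *)
From mathcomp Require Import all_boot.

Set Implicit Arguments.
Unset Strict Implicit.
Unset Printing Implicit Defensive.

Definition between (V : finType) (arc : rel V) (x y : V) : {set V} :=
  outN arc x :&: inN arc y.

Lemma mem_between (V : finType) (arc : rel V) (x y u : V) :
  (u \in between arc x y) = arc x u && arc u y.
Proof. by rewrite !inE. Qed.

Lemma card_pairs_between (I V : finType) (v : I -> V) (arc : rel V) (x y : V) :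
  bijective v ->
  #|[set p : I * I | (x \in between arc (v p.1) (v p.2)) &&
                     (y \in between arc (v p.1) (v p.2))]| =
  #|outN arc x :&: outN arc y| * #|inN arc x :&: inN arc y|.
Proof.
move=> bv; have preim_card (R : {set V}) : #|v @^-1: R| = #|R|.
  exact: on_card_preimset (onW_bij _ bv).
rewrite mulnC -(preim_card (inN arc x :&: inN arc y)).
rewrite -(preim_card (outN arc x :&: outN arc y)) -cardsX.
apply: eq_card => -[i j]; rewrite /between /outN /inN !inE /=.
by do 4 case: (arc _ _).
Qed.

Lemma S_sub_Aset_Bset (V : finType) (n : nat) (v : 'I_n -> V)
    (S : 'I_n -> 'I_n -> {set V}) (i j : 'I_n) :
  S i j \subset Aset v S i :&: Bset v S j.
Proof.
apply/subsetP => u hu; rewrite /Aset /Bset /Srow /Scol !inE.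
by apply/andP; split; apply/orP; left; apply/bigcupP; [exists j | exists i].
Qed.

Lemma acyclic_of_rank (V : finType) (arc : rel V) (f : V -> nat) :
  (forall x y, arc x y -> f x < f y) -> acyclic arc.
Proof.
move=> arc_lt x y hxy; apply/negP => /connectP[p pyp ex]; subst x.
have le_last : f y <= f (last y p).
  elim: p y {hxy} pyp => [|z p IH] y //= /andP[hyz hp].
  exact: leq_trans (ltnW (arc_lt _ _ hyz)) (IH _ hp).
by move: le_last; rewrite leqNgt (arc_lt _ _ hxy).
Qed.

Lemma monotone_enumeration (V : finType) (n : nat) (f : V -> nat) :
  #|V| = n -> exists v : 'I_n -> V,
    bijective v /\ forall i j, f (v i) < f (v j) -> i < j.
Proof.
move=> hn; pose le := [rel a b : V | f a <= f b].
pose s := sort le (enum V).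
have size_s : size s = n by rewrite size_sort -cardT hn.
have uniq_s : uniq s by rewrite sort_uniq enum_uniq.
have sorted_s : sorted le s by apply: sort_sorted => a b; exact: leq_total.
pose v (i : 'I_n) := nth (enum_val (cast_ord (esym hn) i)) s i.
have vE x0 i : v i = nth x0 s i by apply: set_nth_default; rewrite size_s.
have v_inj : injective v.
  move=> i j; rewrite (vE (v i) i) (vE (v i) j) => /eqP.
  by rewrite nth_uniq ?size_s // => /eqP/val_inj.
exists v; split; first by apply: (inj_card_bij v_inj); rewrite card_ord hn.
move=> i j; apply: contraTT; rewrite -!leqNgt => le_ji.
have := sorted_leq_nth (fun a b c => @leq_trans (f a) (f b) (f c))
  (fun a => leqnn (f a)) (v i) sorted_s.
by move=> /(_ j i); rewrite !inE size_s !ltn_ord -!vE; apply.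
Qed.

Section TopologicalOrder.
Variables (V : finType) (arc : rel V).
Hypothesis arc_acyclic : acyclic arc.

Definition num_ancestors (x : V) : nat := #|[set z | connect arc z x]|.

Lemma num_ancestors_lt x y : arc x y -> num_ancestors x < num_ancestors y.
Proof.
move=> hxy; apply/proper_card/properP; split.
  apply/subsetP => z; rewrite !inE => hzx; exact: connect_trans hzx (connect1 hxy).
by exists y; rewrite !inE ?connect0 //; exact: arc_acyclic.
Qed.

Lemma acyclic_topological_order n : #|V| = n ->
  exists v : 'I_n -> V, bijective v /\ forall i j, arc (v i) (v j) -> i < j.
Proof.
move=> hn; have [v [v_bij v_mono]] := monotone_enumeration num_ancestors hn.
by exists v; split=> // i j /num_ancestors_lt/v_mono.
Qed.

End TopologicalOrder.

Section BetweenPartition.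
Variables (V : finType) (arc : rel V) (n : nat) (v : 'I_n -> V).
Let S i j := between arc (v i) (v j).

Lemma Aset_between_sub i : Aset v S i \subset outN arc (v i).
Proof.
apply/subsetP => u; rewrite /Aset /Srow /Tplus !inE.
case/orP => [/bigcupP[p _]|/imsetP[[a b]]]; first by rewrite mem_between => /andP[].
by rewrite inE mem_between /= => /andP[_ ?] ->.
Qed.

Lemma Bset_between_sub j : Bset v S j \subset inN arc (v j).
Proof.
apply/subsetP => u; rewrite /Bset /Scol /Tminus !inE.
case/orP => [/bigcupP[q _]|/imsetP[[a b]]]; first by rewrite mem_between => /andP[].
by rewrite inE mem_between /= => /andP[? _] ->.
Qed.

Lemma Aset_Bset_between i j : Aset v S i :&: Bset v S j = S i j.
Proof.
apply/eqP; rewrite eqEsubset S_sub_Aset_Bset andbT.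
exact: setISS (Aset_between_sub i) (Bset_between_sub j).
Qed.

Hypothesis v_bij : bijective v.

Lemma between_double_indexed_ECP (m : V -> V -> nat) :
  is_double_competition_multigraph arc m -> double_indexed_ECP m S.
Proof.
move=> dcm; split=> [i j x y | x y nxy]; last first.
  by rewrite dcm // -(card_pairs_between _ _ _ v_bij).
rewrite !mem_between => /andP[ix xj] /andP[iy yj] nxy.
rewrite dcm // muln_gt0; apply/andP; split; apply/card_gt0P.
  by exists (v j); rewrite !inE xj yj.
by exists (v i); rewrite !inE ix iy.
Qed.

End BetweenPartition.

Section PartitionDigraph.
Variables (V : finType) (n : nat) (v : 'I_n -> V) (S : 'I_n -> 'I_n -> {set V}).
Hypothesis v_bij : bijective v.
Let v_inj := bij_inj v_bij.

Lemma mem_Aset_Bset i j : (v j \in Aset v S i) = (v i \in Bset v S j).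
Proof.
rewrite /Aset /Bset /Srow /Scol /Tplus /Tminus !inE.
apply/orP/orP => [[/bigcupP[p _ h]|/imsetP[[a b]]]|[/bigcupP[q _ h]|/imsetP[[a b]]]].
- by right; apply/imsetP; exists (i, p); rewrite ?inE.
- by rewrite inE /= => h /v_inj ->; left; apply/bigcupP; exists a.
- by right; apply/imsetP; exists (q, j); rewrite ?inE.
- by rewrite inE /= => h /v_inj ->; left; apply/bigcupP; exists b.
Qed.

Definition partition_arc : rel V :=
  [rel x y | [exists i, (x == v i) && (y \in Aset v S i)]].

Lemma partition_arc_Aset i u : partition_arc (v i) u = (u \in Aset v S i).
Proof.
apply/existsP/idP => [[k /andP[/eqP/v_inj <-]] //|hu].
by exists i; rewrite eqxx.
Qed.

Lemma partition_arc_Bset u j : partition_arc u (v j) = (u \in Bset v S j).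
Proof.
have [g _ gv] := v_bij.
by rewrite -(gv u) partition_arc_Aset mem_Aset_Bset.
Qed.

Lemma between_partition_arc i j :
  between partition_arc (v i) (v j) = Aset v S i :&: Bset v S j.
Proof.
by apply/setP => u; rewrite mem_between inE partition_arc_Aset partition_arc_Bset.
Qed.

Hypothesis S_order : forall i j k, v k \in S i j -> i < k < j.

Lemma Aset_index_lt i j : v j \in Aset v S i -> i < j.
Proof.
rewrite /Aset /Srow /Tplus !inE.
case/orP => [/bigcupP[p _ /S_order/andP[]] //|/imsetP[[a b]]].
by rewrite inE /= => /S_order/andP[lt_ai lt_ib] /v_inj ->.
Qed.

Lemma partition_arc_acyclic : acyclic partition_arc.
Proof.
have [g _ gv] := v_bij.
apply: (acyclic_of_rank (f := fun x => val (g x))) => x y.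
by rewrite -{1}(gv x) -{1}(gv y) partition_arc_Aset => /Aset_index_lt.
Qed.

Hypothesis S_Aset_Bset : forall i j,
  2 <= #|Aset v S i :&: Bset v S j| -> Aset v S i :&: Bset v S j = S i j.

Lemma pair_mem_S i j x y : x != y ->
  (x \in S i j) && (y \in S i j) =
  (x \in Aset v S i :&: Bset v S j) && (y \in Aset v S i :&: Bset v S j).
Proof.
move=> nxy; apply/idP/idP => /andP[hx hy].
  by rewrite !(subsetP (S_sub_Aset_Bset v S i j)).
have two_le : 2 <= #|Aset v S i :&: Bset v S j|.
  have := cards2 x y; rewrite nxy => <-.
  by apply/subset_leq_card/subsetP => u /set2P[] ->.
by rewrite -(S_Aset_Bset two_le) hx hy.
Qed.

End PartitionDigraph.

Theorem theorem4 (V : finType) (n : nat) (hn : #|V| = n)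
  (m : V -> V -> nat) (msym : forall x y : V, m x y = m y x) :
  (exists arc : rel V, acyclic arc /\ is_double_competition_multigraph arc m)
  <->
  (exists (v : 'I_n -> V) (S : 'I_n -> 'I_n -> {set V}),
     bijective v /\ double_indexed_ECP m S /\
     (forall i j : 'I_n, 2 <= #|Aset v S i :&: Bset v S j| ->
        Aset v S i :&: Bset v S j = S i j) /\
     (forall i j k : 'I_n, v k \in S i j -> (i < k < j)%N)).
Proof.
split=> [[arc [arc_acyclic dcm]] | [v [S [v_bij [[_ S_count] [S_AB S_order]]]]]].
- have [v [v_bij v_mono]] := acyclic_topological_order arc_acyclic hn.
  exists v, (fun i j => between arc (v i) (v j)).
  split=> //; split; first exact: between_double_indexed_ECP.
  split=> [i j _ | i j k]; first exact: Aset_Bset_between.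
  by rewrite mem_between => /andP[/v_mono -> /v_mono ->].
- exists (partition_arc v S); split; first exact: partition_arc_acyclic.
  move=> x y nxy; rewrite -S_count // -(card_pairs_between _ _ _ v_bij).
  apply: eq_card => -[i j]; rewrite 2!in_set /= !between_partition_arc //.
  exact: pair_mem_S.
Qed.
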